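(* Fix $d\ge1$, $p\in[0,1]$ and $k\in\{0,\dots,2d\}$ with $k\ge 1+2dp$. Then for any two disjoint nonempty sets $A,B\subseteq\mathcal N_o$, $$\mathbf P_p[N(o)\cap A\neq\emptyset\text{ and }N(o)\cap B\neq\emptyset]\le \mathbf Q_{k/(2d)}[N(o)\cap A\neq\emptyset\text{ and }N(o)\cap B\neq\emptyset].$$
   Context: $\mathcal N_o=\{v\in\mathbb Z^d:\|v\|_1=1\}$; $N(o)$ is a random subset of $\mathcal N_o$. Under $\mathbf P_p$ each element of $\mathcal N_o$ is included independently with probability $p$. Under $\mathbf Q_{k/(2d)}$, $N(o)$ is a uniformly random $k$-element subset of $\mathcal N_o$. *)

From mathcomp Require Import all_boot all_order all_algebra.
Set Implicit Arguments. Unset Strict Implicit. Unset Printing Implicit Defensive.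
Import Order.TTheory GRing.Theory Num.Theory.
Local Open Scope ring_scope.

(* The neighbourhood N_o = {v in Z^d : ||v||_1 = 1} = {+e_i, -e_i : i < d},
   labelled by (i, s) : 'I_d * bool, where (i, true) <-> +e_i, (i, false) <-> -e_i. *)
Definition Nbr (d : nat) : finType := ('I_d * bool)%type.

Definition nbr_vec (d : nat) (v : Nbr d) : 'I_d -> int :=
  fun j => if j == v.1 then (if v.2 then 1 else -1) else 0.

Definition Pp (R : nzRingType) (d : nat) (p : R) (E : pred {set Nbr d}) : R :=
  \sum_(S : {set Nbr d} | E S) p ^+ #|S| * (1 - p) ^+ (#|[set: Nbr d]| - #|S|).

Definition Qk (R : fieldType) (d k : nat) (E : pred {set Nbr d}) : R :=
  #|[set S : {set Nbr d} | (#|S| == k) && E S]|%:R / ('C(2 * d, k))%:R.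

Definition hits_both (d : nat) (A B : {set Nbr d}) : pred {set Nbr d} :=
  fun N => (N :&: A != set0) && (N :&: B != set0).

From mathcomp Require Import all_boot all_order all_algebra.
From mathcomp Require Import zify ring lra.
Import Order.TTheory GRing.Theory Num.Theory.
Local Open Scope ring_scope.

(* Write q = 1 - p, n = 2d, a = #|A|, b = #|B|.  By inclusion-exclusion over the
   events "N(o) misses A", "misses B", "misses A u B", the P-probability is
   (1 - q^a)(1 - q^b), and the Q-probability is 1 - f a - f b + f (a + b) with
   f m = C(n - m, k) / C(n, k).  The hypothesis k >= 1 + n p makes every ratio
   C(N - 1, j) / C(N, j) = (N - j) / N with N <= n and j >= k - 1 at most q.
   Hence f a <= q^a, and, writing C(N + a, k) - C(N, k) as a sum of C(_, k - 1),
   f b - f (a + b) <= q^b (1 - f a).  So the Q-probability is at least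
   (1 - q^b)(1 - f a) >= (1 - q^b)(1 - q^a). *)

Section SubsetSums.

Variables (R : comNzRingType) (T : finType).
Implicit Types (A B C S : {set T}) (g : {set T} -> R).

Lemma sum_hits_both A B g :
  \sum_(S | (S :&: A != set0) && (S :&: B != set0)) g S =
  \sum_S g S - \sum_(S | S :&: A == set0) g S - \sum_(S | S :&: B == set0) g S
  + \sum_(S | S :&: (A :|: B) == set0) g S.
Proof.
rewrite [LHS]big_mkcond !(big_mkcond (fun S => _ == set0)) -!sumrB -big_split /=.
apply: eq_bigr => S _; rewrite setIUr setU_eq0.
by case: (S :&: A == set0); case: (S :&: B == set0) => /=; ring.
Qed.

Lemma prod_indicator_weight (p : R) S :
  \prod_i (if i \in S then p else 1 - p) = p ^+ #|S| * (1 - p) ^+ (#|T| - #|S|).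
Proof.
rewrite (bigID (mem S)) /=; congr (_ * _).
  by rewrite (eq_bigr (fun=> p)) => [|i ->]; rewrite ?prodr_const.
rewrite (eq_bigr (fun=> 1 - p)) => [|i /negbTE -> //].
by rewrite prodr_const -(cardC (mem S)) addKn.
Qed.

Lemma sum_weight_disjoint (p : R) C :
  \sum_(S | S :&: C == set0) p ^+ #|S| * (1 - p) ^+ (#|T| - #|S|) = (1 - p) ^+ #|C|.
Proof.
(* Expand (1 - p)^#|C| over subsets: the sets meeting C get a zero factor. *)
have -> : (1 - p) ^+ #|C| = \prod_i ((if i \in C then 0 else p) + (1 - p)).
  rewrite (bigID (mem C)) /= [X in _ * X]big1 => [|i /negbTE ->]; last first.
    by rewrite addrC subrK.
  by rewrite mulr1 (eq_bigr (fun=> 1 - p)) => [|i ->]; rewrite ?add0r ?prodr_const.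
rewrite bigA_distr [RHS](bigID (fun S => S :&: C == set0)) /= [X in _ = _ + X]big1 ?addr0.
  apply: eq_big => // S /eqP /setP disjSC; rewrite -prod_indicator_weight.
  apply: eq_bigr => i _; case: ifP => // iS; case: ifP => // iC.
  by have := disjSC i; rewrite !inE iS iC.
move=> S /set0Pn [i]; rewrite inE => /andP [iS iC].
by rewrite (bigD1 i) //= iS iC mul0r.
Qed.

Lemma sum_card_eq_disjoint C k :
  \sum_(S | S :&: C == set0) (#|S| == k)%:R = 'C(#|T| - #|C|, k)%:R :> R.
Proof.
have -> : (#|T| - #|C| = #|~: C|)%N by rewrite -(cardsC C) addKn.
rewrite -cards_draws -sum1_card natr_sum [LHS]big_mkcond [RHS]big_mkcond.
apply: eq_bigr => S _; rewrite inE -disjoints_subset -setI_eq0.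
by case: (S :&: C == set0); case: (#|S| == k).
Qed.

End SubsetSums.

Lemma bin_addn_sum N a j :
  'C(N + a, j.+1) = ('C(N, j.+1) + \sum_(i < a) 'C(N + i, j))%N.
Proof.
elim: a => [|a IH]; first by rewrite addn0 big_ord0 addn0.
by rewrite addnS binS IH big_ord_recr /= addnA.
Qed.

Lemma ler_bin_ratio (R : realDomainType) (p : R) N j :
  N.+1%:R * p <= j%:R -> 'C(N, j)%:R <= (1 - p) * 'C(N.+1, j)%:R.
Proof.
move=> Np_le_j.
have [jN|Nj] := leqP j N.+1; last by rewrite !bin_small ?mulr0 // ltnW.
have downE : N.+1%:R * 'C(N, j)%:R = (N.+1 - j)%:R * 'C(N.+1, j)%:R :> R.
  by rewrite -!natrM -mul_bin_down.
rewrite -(ler_pM2l (ltr0Sn R N)) downE mulrA ler_wpM2r // natrB //.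
lra.
Qed.

Lemma ler_iter_ratio (R : realDomainType) (q : R) (u : nat -> R) M N m :
  0 <= q -> (forall i, (i < M)%N -> u i <= q * u i.+1) -> (N + m <= M)%N ->
  u N <= q ^+ m * u (N + m)%N.
Proof.
move=> q_ge0 ratio; elim: m N => [|m IH] N NmM; first by rewrite expr0 mul1r addn0.
apply: (le_trans (ratio N _)); first lia.
rewrite exprS -mulrA addnS -addSn ler_wpM2l // IH //; lia.
Qed.

Section MissBounds.

Variables (R : realFieldType) (n k : nat) (p : R).
Hypotheses (p_ge0 : 0 <= p) (p_le1 : p <= 1) (k_large : 1 + n%:R * p <= k%:R).

Let k_gt0 : (0 < k)%N.
Proof.
have np_ge0 : 0 <= n%:R * p by rewrite mulr_ge0.
have : 0 < k%:R :> R by move: k_large; lra.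
by rewrite ltr0n.
Qed.

Let q_ge0 : 0 <= 1 - p. Proof. by rewrite subr_ge0. Qed.

Let mulr_le_predk i : (i <= n)%N -> i%:R * p <= k.-1%:R.
Proof.
move=> i_le_n; rewrite -subn1 natrB ?k_gt0 //.
have : i%:R * p <= n%:R * p by rewrite ler_wpM2r // ler_nat.
move: k_large; lra.
Qed.

Lemma bin_sub_le a : (a <= n)%N ->
  'C(n - a, k)%:R <= (1 - p) ^+ a * 'C(n, k)%:R.
Proof.
move=> a_le_n.
have ratio i : (i < n)%N -> 'C(i, k)%:R <= (1 - p) * 'C(i.+1, k)%:R.
  move=> i_lt_n; apply: ler_bin_ratio.
  have : i.+1%:R * p <= k.-1%:R := mulr_le_predk _ i_lt_n.
  have : k.-1%:R <= k%:R :> R by rewrite ler_nat leq_pred.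
  lra.
have := @ler_iter_ratio _ _ (fun N => 'C(N, k)%:R) n (n - a) a q_ge0 ratio.
by rewrite subnK //; apply.
Qed.

Lemma bin_diff_sub_le a b : (a + b <= n)%N ->
  'C(n - b, k)%:R - 'C(n - a - b, k)%:R
    <= (1 - p) ^+ b * ('C(n, k)%:R - 'C(n - a, k)%:R).
Proof.
move=> ab_le_n.
pose u N : R := \sum_(i < a) 'C(N + i, k.-1)%:R.
have uE N : u N = 'C(N + a, k)%:R - 'C(N, k)%:R.
  have := bin_addn_sum N a k.-1; rewrite prednK ?k_gt0 // => ->.
  by rewrite natrD natr_sum addrC addKr.
have ratio i : (i < n - a)%N -> u i <= (1 - p) * u i.+1.
  move=> i_lt; rewrite /u mulr_sumr; apply: ler_sum => l _; rewrite addSn.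
  by apply/ler_bin_ratio/mulr_le_predk; have := ltn_ord l; lia.
have := @ler_iter_ratio _ _ u (n - a) (n - a - b) b q_ge0 ratio.
rewrite !uE subnK; last lia.
have -> : (n - a - b + a = n - b)%N by lia.
rewrite subnK; last lia.
by apply.
Qed.

End MissBounds.

Lemma cardsU_disjoint (T : finType) (A B : {set T}) :
  [disjoint A & B] -> #|A :|: B| = (#|A| + #|B|)%N.
Proof. by move=> AB; apply/eqP; rewrite (leq_card_setU A B).2. Qed.

Lemma card_Nbr d : #|Nbr d| = (2 * d)%N.
Proof. by rewrite card_prod card_ord card_bool mulnC. Qed.

Lemma Pp_hits_both (R : comNzRingType) d (p : R) (A B : {set Nbr d}) :
  [disjoint A & B] ->
  Pp p (hits_both A B) = (1 - (1 - p) ^+ #|A|) * (1 - (1 - p) ^+ #|B|).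
Proof.
move=> AB; rewrite /Pp /hits_both cardsT sum_hits_both.
rewrite (eq_bigl (fun S => S :&: set0 == set0)) => [|S]; last by rewrite setI0 eqxx.
rewrite !sum_weight_disjoint cards0 cardsU_disjoint // exprD.
ring.
Qed.

Lemma Qk_hits_both (R : fieldType) d k (A B : {set Nbr d}) :
  [disjoint A & B] ->
  Qk R k (hits_both A B) =
    ('C(2 * d, k)%:R - 'C(2 * d - #|A|, k)%:R - 'C(2 * d - #|B|, k)%:R
       + 'C(2 * d - #|A| - #|B|, k)%:R) / 'C(2 * d, k)%:R.
Proof.
move=> AB; rewrite /Qk; congr (_ / _).
rewrite -sum1_card natr_sum [LHS]big_mkcond.
rewrite (eq_bigr (fun S => if hits_both A B S then (#|S| == k)%:R else 0)) => [|S _].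
  rewrite -big_mkcond sum_hits_both.
  rewrite (eq_bigl (fun S => S :&: set0 == set0)) => [|S]; last by rewrite setI0 eqxx.
  by rewrite !sum_card_eq_disjoint cards0 cardsU_disjoint // card_Nbr subn0 subnDA.
by rewrite inE andbC; case: (hits_both A B S); case: (#|S| == k).
Qed.

Theorem lemma3p9 (R : realFieldType) (d : nat) (p : R) (k : nat)
  (A B : {set Nbr d}) :
  (1 <= d)%N -> 0 <= p -> p <= 1 -> (k <= 2 * d)%N ->
  1 + (2 * d)%:R * p <= k%:R ->
  [disjoint A & B] -> A != set0 -> B != set0 ->
  Pp p (hits_both A B) <= Qk R k (hits_both A B).
Proof.
move=> _ p_ge0 p_le1 k_le k_large AB _ _.
rewrite Pp_hits_both // Qk_hits_both // ler_pdivlMr ?ltr0n ?bin_gt0 //.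
have ab_le : (#|A| + #|B| <= 2 * d)%N.
  by rewrite -cardsU_disjoint // -card_Nbr max_card.
have missA := bin_sub_le _ _ _ _ p_ge0 p_le1 k_large _
  (leq_trans (leq_addr _ _) ab_le).
have missAB := bin_diff_sub_le _ _ _ _ p_ge0 p_le1 k_large _ _ ab_le.
set x := (1 - p) ^+ #|A| in missA *; set y := (1 - p) ^+ #|B| in missAB *.
have y_le1 : y <= 1 by rewrite exprn_ile1 // ?subr_ge0; lra.
set C0 := 'C(2 * d, k)%:R; set Ca := 'C(2 * d - #|A|, k)%:R.
have : (1 - y) * ((1 - x) * C0) <= (1 - y) * (C0 - Ca).
  by rewrite ler_wpM2l ?subr_ge0 //; lra.
lra.
Qed.
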